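(* Consider a commutative diagram of abelian groups with exact rows $\mathcal{E}_1: 0\to A_1\xrightarrow{\iota_1}G_1\xrightarrow{\pi_1}B_1\to 0$, $\mathcal{E}_2: 0\to A_2\xrightarrow{\iota_2}G_2\xrightarrow{\pi_2}B_2\to 0$, with vertical homomorphisms $\alpha:A_1\to A_2$, $\gamma:G_1\to G_2$, $\beta:B_1\to B_2$ (so $\gamma\circ\iota_1=\iota_2\circ\alpha$ and $\pi_2\circ\gamma=\beta\circ\pi_1$), where $A_i,B_i$ are first countable abelian topological groups and $\alpha,\beta$ are continuous. For $i=1,2$ let $s_i$ be a topologizing section of $\pi_i$ and endow $G_i$ with the topology $\tau_{\mathcal{E}_i,s_i}$. If $s_1$ and $s_2$ are compatible, then $\gamma$ is continuous.
   Context: Topological groups are not assumed Hausdorff. Given an exact sequence of abelian groups $\mathcal{E}:0\to A\xrightarrow{\iota}G\xrightarrow{\pi}B\to 0$ with $A,B$ abelian topological groups and a set-theoretic section $s:B\to G$ of $\pi$ with $s(0_B)=0_G$, put $h_s(b,b')=\iota^{-1}(s(b)+s(b')-s(b+b'))$ and define the group law $(a,b)+_s(a',b')=(a+a'+h_s(b,b'),b+b')$ on $A\times B$; then $\theta_s:(A\times B,+_s)\to G$, $(a,b)\mapsto\iota(a)+s(b)$, is a group isomorphism. Let $\tau_{A,B}$ be the topology on $(A\times B,+_s)$ whose basic open sets are the $+_s$-translates of products $U\times V$ with $U$ an open neighborhood of $0_A$ and $V$ an open neighborhood of $0_B$ (so these products form a neighborhood basis of $(0_A,0_B)$). The section $s$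 is called a topologizing section if $(A\times B,+_s,\tau_{A,B})$ is a topological group; then $\tau_{\mathcal{E},s}$ denotes the topology on $G$ transported from $\tau_{A,B}$ via $\theta_s$. In the setting of the diagram above, with sections $s_i$ of $\pi_i$ satisfying $s_i(0)=0$, define $\sigma_{s_1,s_2}:B_1\to A_2$, $\sigma_{s_1,s_2}(b)=\iota_2^{-1}(\gamma(s_1(b))-s_2(\beta(b)))$ (well-defined by commutativity). The sections $s_1,s_2$ are called compatible if $\sigma_{s_1,s_2}$ is continuous at $0_{B_1}$. *)

From HB Require Import structures.
From mathcomp Require Import all_boot all_algebra.
From mathcomp Require Import classical_sets boolp topology tvs.
Set Implicit Arguments. Unset Strict Implicit. Unset Printing Implicit Defensive.
Import GRing.Theory.
Local Open Scope classical_set_scope.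
Local Open Scope ring_scope.

Definition first_countable (T : topologicalType) : Prop :=
  forall x : T, exists N : nat -> set T,
    (forall n, nbhs x (N n)) /\ (forall U, nbhs x U -> exists n, N n `<=` U).

Definition short_exact (A G B : zmodType) (iota : A -> G) (pi : G -> B) : Prop :=
  [/\ injective iota, (forall b, exists g, pi g = b)
    & (forall g, pi g = 0 <-> exists a, iota a = g)].

Definition zero_section (G B : zmodType) (pi : G -> B) (s : B -> G) : Prop :=
  (forall b, pi (s b) = b) /\ s 0 = 0.

(* iota^{-1} (on the image of iota; arbitrary (0) outside). *)
Definition inv_on (A G : zmodType) (iota : A -> G) (g : G) : A :=
  xget 0 [set a | iota a = g].

Definition hs (A G B : zmodType) (iota : A -> G) (s : B -> G) (b b' : B) : A :=
  inv_on iota (s b + s b' - s (b + b')).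

Definition addS (A G B : zmodType) (iota : A -> G) (s : B -> G)
    (p q : A * B) : A * B :=
  (p.1 + q.1 + hs iota s p.2 q.2, p.2 + q.2).

Definition oppS (A G B : zmodType) (iota : A -> G) (s : B -> G)
    (p : A * B) : A * B :=
  (- p.1 - hs iota s p.2 (- p.2), - p.2).

Definition thetaS (A G B : zmodType) (iota : A -> G) (s : B -> G)
    (p : A * B) : G := iota p.1 + s p.2.

Definition basicS (A G B : zmodType) (iota : A -> G) (s : B -> G)
    (q : A * B) (U : set A) (V : set B) : set (A * B) :=
  [set p | exists u v, [/\ U u, V v & p = addS iota s q (u, v)]].

(* open sets of tau_{A,B}: unions of basic open sets
   q +_s (U x V), U (resp. V) an open neighbourhood of 0_A (resp. 0_B). *)
Definition tauS_open (A B : topologicalZmodType) (G : zmodType)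
    (iota : A -> G) (s : B -> G) (O : set (A * B)) : Prop :=
  forall p, O p -> exists q (U : set A) (V : set B),
    [/\ open U, U 0, open V, V 0
      & basicS iota s q U V p /\ basicS iota s q U V `<=` O].

(* s is topologizing: tau_{A,B} is a topology (closed under finite
   intersections; arbitrary unions, empty set and whole space are automatic)
   and (A x B, +_s, tau_{A,B}) is a topological group (+_s jointly continuous,
   inversion continuous). *)
Definition topologizing (A B : topologicalZmodType) (G : zmodType)
    (iota : A -> G) (s : B -> G) : Prop :=
  [/\ (forall O1 O2, tauS_open iota s O1 -> tauS_open iota s O2 ->
          tauS_open iota s (O1 `&` O2)),
      (forall p q W, tauS_open iota s W -> W (addS iota s p q) ->
          exists W1 W2, [/\ tauS_open iota s W1, W1 p, tauS_open iota s W2, W2 q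
            & forall p' q', W1 p' -> W2 q' -> W (addS iota s p' q')])
    & (forall p W, tauS_open iota s W -> W (oppS iota s p) ->
          exists W1, [/\ tauS_open iota s W1, W1 p
            & forall p', W1 p' -> W (oppS iota s p')])].

Definition tauG_open (A B : topologicalZmodType) (G : zmodType)
    (iota : A -> G) (s : B -> G) (W : set G) : Prop :=
  tauS_open iota s (thetaS iota s @^-1` W).

Definition sigmaS (A2 : zmodType) (B1 B2 : zmodType) (G1 G2 : zmodType)
    (iota2 : A2 -> G2) (gamma : G1 -> G2) (beta : B1 -> B2)
    (s1 : B1 -> G1) (s2 : B2 -> G2) (b : B1) : A2 :=
  inv_on iota2 (gamma (s1 b) - s2 (beta b)).

Definition compatible (A2 B1 : topologicalZmodType) (B2 G1 G2 : zmodType)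
    (iota2 : A2 -> G2) (gamma : G1 -> G2) (beta : B1 -> B2)
    (s1 : B1 -> G1) (s2 : B2 -> G2) : Prop :=
  {for 0, continuous (sigmaS iota2 gamma beta s1 s2)}.

From HB Require Import structures.
From mathcomp Require Import all_boot all_algebra.
From mathcomp Require Import classical_sets boolp topology tvs.
Set Implicit Arguments. Unset Strict Implicit.
Import GRing.Theory.
Local Open Scope classical_set_scope.
Local Open Scope ring_scope.

(* Transport everything to the product models: theta_s identifies (A x B, +_s)
   with G, and under these identifications gamma becomes the map
   (a, b) |-> (alpha a + sigma b, beta b), a +_s-homomorphism.  A homomorphism
   into a topological group is continuous as soon as it maps small basic
   neighbourhoods of 0 into a given one, which follows here from the continuity
   of alpha and beta, the continuity of sigma at 0 and that of addition in A2;
   translation invariance of the basic open sets does the rest. *)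

Lemma inv_onP (A G : zmodType) (iota : A -> G) (g : G) :
  (exists a, iota a = g) -> iota (inv_on iota g) = g.
Proof. by move=> ex_g; apply: (@xgetPex _ 0 [set a | iota a = g]). Qed.

Section ProductModel.

Variables (A G B : zmodType).
Variables (iota : {additive A -> G}) (pi : {additive G -> B}).
Variable s : B -> G.
Hypotheses (exact : short_exact iota pi) (s_section : zero_section pi s).

Lemma iota_hs (b b' : B) : iota (hs iota s b b') = s b + s b' - s (b + b').
Proof.
have [_ _ ker_pi] := exact; have [sK _] := s_section.
by apply/inv_onP/ker_pi; rewrite !raddfB !raddfD /= !sK subrr.
Qed.

Lemma thetaS_add (p q : A * B) :
  thetaS iota s (addS iota s p q) = thetaS iota s p + thetaS iota s q.
Proof.
by rewrite /thetaS /addS /= !raddfD /= iota_hs addrA subrK addrACA.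
Qed.

Lemma thetaS_opp (p : A * B) :
  thetaS iota s (oppS iota s p) = - thetaS iota s p.
Proof.
rewrite /thetaS /oppS /= !raddfB /= iota_hs raddfN subrr s_section.2 subr0.
by rewrite opprD addrA subrK opprD.
Qed.

Lemma thetaS00 : thetaS iota s (0, 0) = 0.
Proof. by rewrite /thetaS /= raddf0 s_section.2 addr0. Qed.

Lemma thetaS_inj : injective (thetaS iota s).
Proof.
have [iota_inj _ ker_pi] := exact; have [sK _] := s_section.
have pi_iota a : pi (iota a) = 0 by apply/ker_pi; exists a.
move=> [a b] [a' b']; rewrite /thetaS /= => eq_theta.
have eq_b : b = b'.
  by move: (congr1 pi eq_theta); rewrite !raddfD /= !pi_iota !add0r !sK.
by move: eq_theta; rewrite eq_b => /addIr /iota_inj ->.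
Qed.

Lemma addS0 (p : A * B) : addS iota s p (0, 0) = p.
Proof. by apply: thetaS_inj; rewrite thetaS_add thetaS00 addr0. Qed.

Lemma add0S (p : A * B) : addS iota s (0, 0) p = p.
Proof. by apply: thetaS_inj; rewrite thetaS_add thetaS00 add0r. Qed.

Lemma oppS00 : oppS iota s (0, 0) = (0, 0).
Proof. by apply: thetaS_inj; rewrite thetaS_opp thetaS00 oppr0. Qed.

End ProductModel.

Section TopologizingSection.

Variables (A B : topologicalZmodType) (G : zmodType).
Variables (iota : {additive A -> G}) (pi : {additive G -> B}) (s : B -> G).
Hypotheses (exact : short_exact iota pi) (s_section : zero_section pi s).
Hypothesis s_top : topologizing iota s.

(* Pick a basic set r +_s (U x V) through 0 inside W1 `&` W3, where
   W1 +_s (-_s W3) is contained in W; then x = (r +_s x) +_s (-_s r). *)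
Lemma tauS_open_basic0 (W : set (A * B)) :
  tauS_open iota s W -> W (0, 0) ->
  exists (U : set A) (V : set B),
    [/\ open U, U 0, open V, V 0 & basicS iota s (0, 0) U V `<=` W].
Proof.
have [tauI tau_add tau_opp] := s_top.
move=> oW W0.
have [W1 [W2 [oW1 W1_0 oW2 W2_0 W12]]] := tau_add (0, 0) (0, 0) W oW
  (eq_ind_r W W0 (addS0 exact s_section _)).
have [W3 [oW3 W3_0 W3opp]] := tau_opp (0, 0) W2 oW2
  (eq_ind_r W2 W2_0 (oppS00 exact s_section)).
have [r [U [V [oU U0 oV V0 [_ subW13]]]]] :=
  tauI W1 W3 oW1 oW3 (0, 0) (conj W1_0 W3_0).
exists U, V; split => // _ [x1 [x2 [Ux1 Vx2 ->]]].
have W1_rx : W1 (addS iota s r (x1, x2)).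
  by apply: (subW13 _ _).1; exists x1, x2.
have W3_r : W3 r.
  by apply: (subW13 _ _).2; exists 0, 0; rewrite (addS0 exact s_section).
have := W12 _ _ W1_rx (W3opp _ W3_r); congr W.
apply: (thetaS_inj exact s_section).
rewrite !(thetaS_add exact s_section) (thetaS_opp exact s_section).
by rewrite (thetaS00 _ s_section) add0r addrAC subrr add0r.
Qed.

Lemma tauS_open_translate (W : set (A * B)) (p : A * B) :
  tauS_open iota s W -> W p ->
  exists (U : set A) (V : set B), [/\ open U, U 0, open V, V 0
    & forall x, basicS iota s (0, 0) U V x -> W (addS iota s p x)].
Proof.
have [_ tau_add _] := s_top.
move=> oW Wp.
have [W1 [W2 [_ W1p oW2 W2_0 W12]]] := tau_add p (0, 0) W oW
  (eq_ind_r W Wp (addS0 exact s_section p)).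
have [U [V [oU U0 oV V0 subW2]]] := tauS_open_basic0 oW2 W2_0.
by exists U, V; split => // x /subW2; apply: W12.
Qed.

End TopologizingSection.

Section MorphismModel.

Variables (A1 B1 A2 B2 G1 G2 : zmodType).
Variables (iota1 : {additive A1 -> G1}) (pi1 : {additive G1 -> B1}).
Variables (iota2 : {additive A2 -> G2}) (pi2 : {additive G2 -> B2}).
Variables (alpha : {additive A1 -> A2}) (gamma : {additive G1 -> G2}).
Variables (beta : {additive B1 -> B2}) (s1 : B1 -> G1) (s2 : B2 -> G2).
Hypotheses (exact1 : short_exact iota1 pi1) (exact2 : short_exact iota2 pi2).
Hypothesis gamma_iota : forall a, gamma (iota1 a) = iota2 (alpha a).
Hypothesis pi_gamma : forall g, pi2 (gamma g) = beta (pi1 g).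
Hypothesis s1_section : zero_section pi1 s1.
Hypothesis s2_section : zero_section pi2 s2.

Let sigma := sigmaS iota2 gamma beta s1 s2.

Definition gammaS (p : A1 * B1) : A2 * B2 := (alpha p.1 + sigma p.2, beta p.2).

Lemma iota_sigma (b : B1) : iota2 (sigma b) = gamma (s1 b) - s2 (beta b).
Proof.
have [_ _ ker_pi2] := exact2.
apply/inv_onP/ker_pi2.
by rewrite raddfB /= pi_gamma s1_section.1 s2_section.1 subrr.
Qed.

Lemma sigma0 : sigma 0 = 0.
Proof.
have [iota2_inj _ _] := exact2; apply: iota2_inj.
by rewrite iota_sigma s1_section.2 !raddf0 s2_section.2 subrr.
Qed.

Lemma thetaS_gammaS (p : A1 * B1) :
  thetaS iota2 s2 (gammaS p) = gamma (thetaS iota1 s1 p).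
Proof.
by rewrite /thetaS /gammaS /= !raddfD /= iota_sigma gamma_iota -addrA subrK.
Qed.

Lemma gammaS_add (p q : A1 * B1) :
  gammaS (addS iota1 s1 p q) = addS iota2 s2 (gammaS p) (gammaS q).
Proof.
apply: (thetaS_inj exact2 s2_section).
by rewrite thetaS_gammaS (thetaS_add exact1 s1_section) raddfD
  (thetaS_add exact2 s2_section) !thetaS_gammaS.
Qed.

End MorphismModel.

Section MorphismContinuity.

Variables (A1 B1 A2 B2 : topologicalZmodType) (G1 G2 : zmodType).
Variables (iota1 : {additive A1 -> G1}) (pi1 : {additive G1 -> B1}).
Variables (iota2 : {additive A2 -> G2}) (pi2 : {additive G2 -> B2}).
Variables (alpha : {additive A1 -> A2}) (gamma : {additive G1 -> G2}).
Variables (beta : {additive B1 -> B2}) (s1 : B1 -> G1) (s2 : B2 -> G2).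
Hypotheses (exact1 : short_exact iota1 pi1) (exact2 : short_exact iota2 pi2).
Hypothesis pi_gamma : forall g, pi2 (gamma g) = beta (pi1 g).
Hypothesis s1_section : zero_section pi1 s1.
Hypothesis s2_section : zero_section pi2 s2.
Hypotheses (alpha_cont : continuous alpha) (beta_cont : continuous beta).
Hypothesis s_compatible : compatible iota2 gamma beta s1 s2.

Let sigma := sigmaS iota2 gamma beta s1 s2.

Lemma gammaS_basic0 (U' : set A2) (V' : set B2) :
  open U' -> U' 0 -> open V' -> V' 0 ->
  exists (U : set A1) (V : set B1), [/\ open U, U 0, open V, V 0
    & forall x, basicS iota1 s1 (0, 0) U V x ->
        basicS iota2 s2 (0, 0) U' V' (gammaS iota2 alpha gamma beta s1 s2 x)].
Proof.
move=> oU' U'0 oV' V'0.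
have : nbhs ((0 : A2, 0 : A2).1 + (0 : A2, 0 : A2).2) U'.
  by apply: open_nbhs_nbhs; split => //=; rewrite addr0.
move/(add_continuous (0, 0)) => -[[Q1 Q2] /= [nQ1 nQ2] subU'].
have : nbhs (0 : A1) (alpha @^-1` Q1) by apply: alpha_cont; rewrite raddf0.
rewrite nbhsE => -[U [oU U0] subQ1].
have : nbhs (0 : B1) (sigma @^-1` Q2 `&` beta @^-1` V').
  apply: filterI.
  - apply: s_compatible.
    by rewrite (sigma0 exact2 pi_gamma s1_section s2_section).
  - by apply: beta_cont; rewrite raddf0; apply: open_nbhs_nbhs.
rewrite nbhsE => -[V [oV V0] subQ2V'].
exists U, V; split => // _ [x1 [x2 [Ux1 Vx2 ->]]].
have [Q2x2 V'x2] := subQ2V' _ Vx2.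
exists (alpha x1 + sigma x2), (beta x2); split => //.
- by apply: (subU' (alpha x1, sigma x2)); split => //; apply: subQ1.
- by rewrite (add0S exact2 s2_section) (add0S exact1 s1_section).
Qed.

End MorphismContinuity.

Theorem proposition3p2
  (A1 B1 A2 B2 : topologicalZmodType) (G1 G2 : zmodType)
  (iota1 : {additive A1 -> G1}) (pi1 : {additive G1 -> B1})
  (iota2 : {additive A2 -> G2}) (pi2 : {additive G2 -> B2})
  (alpha : {additive A1 -> A2}) (gamma : {additive G1 -> G2})
  (beta : {additive B1 -> B2})
  (s1 : B1 -> G1) (s2 : B2 -> G2) :
  short_exact iota1 pi1 -> short_exact iota2 pi2 ->
  (forall a, gamma (iota1 a) = iota2 (alpha a)) ->
  (forall g, pi2 (gamma g) = beta (pi1 g)) ->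
  first_countable A1 -> first_countable B1 ->
  first_countable A2 -> first_countable B2 ->
  continuous alpha -> continuous beta ->
  zero_section pi1 s1 -> zero_section pi2 s2 ->
  topologizing iota1 s1 -> topologizing iota2 s2 ->
  compatible iota2 gamma beta s1 s2 ->
  forall W : set G2, tauG_open iota2 s2 W ->
    tauG_open iota1 s1 (gamma @^-1` W).
Proof.
move=> ex1 ex2 gamma_iota pi_gamma _ _ _ _ alpha_cont beta_cont
  s1_sec s2_sec _ s2_top compat W oW p Wp.
have thetaGa := thetaS_gammaS ex2 gamma_iota pi_gamma s1_sec s2_sec.
have [U' [V' [oU' U'0 oV' V'0 subW]]] :=
  tauS_open_translate ex2 s2_sec s2_top oW (eq_ind_r W Wp (thetaGa p)).
have [U [V [oU U0 oV V0 GaUV]]] :=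
  gammaS_basic0 ex1 ex2 pi_gamma s1_sec s2_sec alpha_cont beta_cont compat
    oU' U'0 oV' V'0.
exists p, U, V; split => //; split.
  by exists 0, 0; split => //; rewrite (addS0 ex1 s1_sec).
move=> _ [x1 [x2 [Ux1 Vx2 ->]]] /=.
have basic_x : basicS iota1 s1 (0, 0) U V (x1, x2).
  by exists x1, x2; rewrite (add0S ex1 s1_sec).
rewrite -thetaGa (gammaS_add ex1 ex2 gamma_iota pi_gamma s1_sec s2_sec).
by apply: subW; apply: GaUV.
Qed.
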